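(* Let $R$ be a ring and $J\subseteq J(R)$ an ideal of $R$ such that idempotents lift modulo $J$. Then the following are equivalent: (1) $R$ is an abelian ring; (2) $R/J$ is an abelian ring and idempotents lift uniquely modulo $J$.
   Context: All rings are associative with identity; $J(R)$ is the Jacobson radical. A ring is abelian if all its idempotents are central. Idempotents lift modulo an ideal $J$ if for every $a\in R$ with $a^2-a\in J$ there exists an idempotent $e\in R$ with $e-a\in J$; they lift uniquely modulo $J$ if this idempotent $e$ is uniquely determined by $a$. *)

From HB Require Import structures.
From mathcomp Require Import all_boot all_algebra.
Set Implicit Arguments. Unset Strict Implicit. Unset Printing Implicit Defensive.
Import GRing.Theory.
Local Open Scope ring_scope.

Definition left_ideal (R : pzRingType) (I : R -> Prop) : Prop :=
  [/\ I 0, (forall x y, I x -> I y -> I (x - y)) &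
      (forall r x, I x -> I (r * x))].

Definition ideal (R : pzRingType) (I : R -> Prop) : Prop :=
  [/\ I 0, (forall x y, I x -> I y -> I (x - y)),
      (forall r x, I x -> I (r * x)) &
      (forall r x, I x -> I (x * r))].

Definition maximal_left_ideal (R : pzRingType) (M : R -> Prop) : Prop :=
  [/\ left_ideal M, ~ M 1 &
      (forall N : R -> Prop, left_ideal N -> ~ N 1 ->
         (forall x, M x -> N x) -> forall x, N x -> M x)].

Definition jacobson (R : pzRingType) (x : R) : Prop :=
  forall M : R -> Prop, maximal_left_ideal M -> M x.

Definition idempotent (R : pzRingType) (e : R) : Prop := e * e = e.

Definition abelian_ring (R : pzRingType) : Prop :=
  forall e : R, idempotent e -> forall r : R, e * r = r * e.

(* R/J is abelian, written out on representatives: the idempotents of R/J are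
   the classes a + J with a^2 - a in J, and such a class is central iff
   a r - r a in J for all r. *)
Definition abelian_mod (R : pzRingType) (J : R -> Prop) : Prop :=
  forall a : R, J (a * a - a) -> forall r : R, J (a * r - r * a).

Definition idempotents_lift (R : pzRingType) (J : R -> Prop) : Prop :=
  forall a : R, J (a * a - a) -> exists e : R, idempotent e /\ J (e - a).

Definition idempotents_lift_uniquely (R : pzRingType) (J : R -> Prop) : Prop :=
  forall a : R, J (a * a - a) -> exists! e : R, idempotent e /\ J (e - a).

(* Two idempotents that commute and agree modulo J(R) are equal, since their
   "difference" e(1 - f) is an idempotent lying in J(R), and J(R) contains no
   nonzero idempotent. Hence in an abelian ring lifts of idempotents are
   unique, and R/J is abelian because the idempotents of R/J come from central
   idempotents of R. Conversely, for an idempotent e and any r, both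
   e + e r (1 - e) and e + (1 - e) r e are idempotents; when e is central
   modulo J they lift the same idempotent as e, so by uniqueness
   e r (1 - e) = 0 = (1 - e) r e, i.e. e r = e r e = r e. *)

From Pilot Require Import Defs.
From mathcomp Require Import all_boot all_algebra.
From mathcomp Require Import boolp classical_sets.
Set Implicit Arguments.
Unset Strict Implicit.
Import GRing.Theory.
Local Open Scope classical_set_scope.
Local Open Scope ring_scope.

Lemma idempotent1B (R : pzRingType) (e : R) :
  Defs.idempotent e -> Defs.idempotent (1 - e).
Proof. by rewrite /Defs.idempotent mulrBl mul1r !mulrBr mulr1 => ->; rewrite subrr subr0. Qed.

Lemma idempotentM (R : pzRingType) (e f : R) : e * f = f * e ->
  Defs.idempotent e -> Defs.idempotent f -> Defs.idempotent (e * f).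
Proof.
move=> ef ee ff.
by rewrite /Defs.idempotent mulrA -[e * f * e]mulrA -ef mulrA ee -mulrA ff.
Qed.

Lemma idempotentD_mulrB (R : pzRingType) (e r : R) :
  Defs.idempotent e -> Defs.idempotent (e + e * r * (1 - e)).
Proof.
move=> ee; set x := e * r * (1 - e).
have ex : e * x = x by rewrite /x !mulrA ee.
have xe : x * e = 0 by rewrite /x -mulrA mulrBl mul1r ee subrr mulr0.
have xx : x * x = 0 by rewrite {2}/x !mulrA xe !mul0r.
by rewrite /Defs.idempotent mulrDr !mulrDl ee ex xe xx !addr0.
Qed.

Lemma idempotentD_mulBr (R : pzRingType) (e r : R) :
  Defs.idempotent e -> Defs.idempotent (e + (1 - e) * r * e).
Proof.
move=> ee; set y := (1 - e) * r * e.
have ye : y * e = y by rewrite /y -mulrA ee.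
have ey : e * y = 0 by rewrite /y !mulrA mulrBr mulr1 ee subrr !mul0r.
have yy : y * y = 0 by rewrite {1}/y -mulrA ey mulr0.
by rewrite /Defs.idempotent mulrDr !mulrDl ee ye ey yy add0r addr0.
Qed.

Lemma left_ideal_sub_maximal (R : pzRingType) (I : R -> Prop) :
  left_ideal I -> ~ I 1 ->
  exists M, maximal_left_ideal M /\ forall x, I x -> M x.
Proof.
move=> [I0 IB IM] I1.
(* The last clause reads "X is empty or contains I", so that the empty chain
   has an upper bound. *)
pose P (X : set R) := [/\ forall x y, X x -> X y -> X (x - y),
  forall r x, X x -> X (r * x), ~ X 1 & forall x, X x -> I `<=` X].
have chainP F : F `<=` P -> total_on F subset -> P (\bigcup_(X in F) X).
  move=> FP Ftot; split.
  - move=> x y [X FX Xx] [Y FY Yy].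
    have [XY|YX] := Ftot _ _ FX FY.
    + by exists Y => //; have [XB _ _ _] := FP _ FY; exact: XB (XY _ Xx) Yy.
    + by exists X => //; have [XB _ _ _] := FP _ FX; exact: XB Xx (YX _ Yy).
  - by move=> r x [X FX Xx]; exists X => //; have [_ XM _ _] := FP _ FX; exact: XM.
  - by move=> [X FX X1]; have [_ _ nX1 _] := FP _ FX.
  - move=> x [X FX Xx] y Iy; exists X => //.
    by have [_ _ _ XI] := FP _ FX; exact: XI _ Xx _ Iy.
have [A [[AB AM A1 AI] Amax]] := Zorn_bigcup chainP.
have IA : I `<=` A.
  have [[x Ax]|A0] := pselect (exists x, A x); first exact: AI Ax.
  exfalso; apply: (Amax I); last by split => // x _.
  by split=> [x Ax|IsubA]; [case: A0; exists x | apply: A0; exists 0; exact: IsubA].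
exists A; split => //; split => //; first by split => //; exact: IA.
move=> N [_ NB NM] N1 AN x Nx; apply: contrapT => nAx.
apply: (Amax N); first by split => // NA; exact: nAx (NA _ Nx).
by split => // y _; exact: subset_trans IA AN.
Qed.

Section Jacobson.
Variable R : pzRingType.
Implicit Types e f r x : R.

Lemma jacobsonMl r x : jacobson x -> jacobson (r * x).
Proof. by move=> Jx M MM; have [[_ _ MMl] _ _] := MM; exact: MMl (Jx M MM). Qed.

Lemma jacobsonN x : jacobson x -> jacobson (- x).
Proof. by move=> /(jacobsonMl (-1)); rewrite mulN1r. Qed.

Lemma jacobson_linv1B x : jacobson x -> exists r, r * (1 - x) = 1.
Proof.
move=> Jx; apply: contrapT => /forallNP no_linv.
pose I y := exists r, y = r * (1 - x).
have [M [MM IM]] : exists M, maximal_left_ideal M /\ I `<=` M.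
  apply: left_ideal_sub_maximal => [|[r r1]]; last exact: no_linv r (esym r1).
  split; first by exists 0; rewrite mul0r.
  - by move=> _ _ [r ->] [s ->]; exists (r - s); rewrite mulrBl.
  - by move=> t _ [r ->]; exists (t * r); rewrite mulrA.
have M1x : M (1 - x) by apply: IM; exists 1; rewrite mul1r.
have [[M0 MB _] M1 _] := MM.
have MNx : M (- x) by rewrite -sub0r; apply: (MB) => //; exact: Jx.
by apply: M1; rewrite -[1](subrK x) -[x in _ + x]opprK; exact: MB.
Qed.

Lemma jacobson_idempotent_eq0 e : jacobson e -> Defs.idempotent e -> e = 0.
Proof.
move=> /jacobson_linv1B[r r1] ee.
by rewrite -[e]mul1r -r1 -mulrA mulrBl mul1r ee subrr mulr0.
Qed.

Lemma commuting_idempotents_eq e f : e * f = f * e ->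
  Defs.idempotent e -> Defs.idempotent f -> jacobson (e - f) -> e = f.
Proof.
have absorb (u v : R) : u * v = v * u ->
    Defs.idempotent u -> Defs.idempotent v -> jacobson (u - v) -> u = u * v.
  move=> uv uu vv Juv; apply/eqP; rewrite -subr_eq0 -[u in u - _]mulr1 -mulrBr.
  apply/eqP; apply: jacobson_idempotent_eq0.
    by rewrite mulrBr mulr1 -{1}uu -mulrBr; exact: jacobsonMl.
  apply: idempotentM => //; last exact: idempotent1B.
  by rewrite mulrBr mulrBl mulr1 mul1r uv.
move=> ef ee ff Jef.
rewrite (absorb e f) // ef -(absorb f e) //.
by rewrite -opprB; exact: jacobsonN.
Qed.

End Jacobson.

Section LiftingModJ.
Variables (R : pzRingType) (J : R -> Prop).
Hypotheses (idJ : ideal J) (J_jacobson : forall x, J x -> jacobson x).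
Hypothesis lift : idempotents_lift J.

Lemma abelian_mod_of_abelian : abelian_ring R -> abelian_mod J.
Proof.
have [_ JB JMl JMr] := idJ.
move=> ab a Ja r; have [e [ee Jea]] := lift Ja.
have -> : a * r - r * a = r * (e - a) - (e - a) * r.
  by rewrite mulrBr mulrBl (ab e ee r) opprB [_ + (_ - _)]addrC addrA subrK.
by apply: JB; [apply: JMl | apply: JMr].
Qed.

Lemma lift_uniquely_of_abelian : abelian_ring R -> idempotents_lift_uniquely J.
Proof.
have [_ JB _ _] := idJ.
move=> ab a Ja; have [e [ee Jea]] := lift Ja.
exists e; split => // f [ff Jfa].
apply: commuting_idempotents_eq => //; first exact: ab.
apply: J_jacobson; have -> : e - f = (e - a) - (f - a) by rewrite opprB addrA subrK.
exact: JB.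
Qed.

Lemma idempotent_central_of_unique_lift (e : R) : Defs.idempotent e ->
  (forall f, Defs.idempotent f -> J (f - e) -> f = e) ->
  (forall r, J (e * r - r * e)) -> forall r, e * r = r * e.
Proof.
have [_ _ JMl JMr] := idJ.
move=> ee e_unique Je r.
have corner0 (x : R) : Defs.idempotent (e + x) -> J x -> x = 0.
  move=> ex Jx; apply: (addrI e); rewrite addr0; apply: e_unique => //.
  by rewrite addrAC subrr add0r.
have er : e * r * (1 - e) = 0.
  apply: corner0; first exact: idempotentD_mulrB.
  have -> : e * r * (1 - e) = e * (e * r - r * e).
    by rewrite !mulrBr mulr1 !mulrA ee.
  exact: JMl.
have re : (1 - e) * r * e = 0.
  apply: corner0; first exact: idempotentD_mulBr.
  have -> : (1 - e) * r * e = (e * r - r * e) * - e.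
    by rewrite mulrN !mulrBl mul1r -!mulrA ee opprB.
  exact: JMr.
move/eqP: er; rewrite mulrBr mulr1 subr_eq0 => /eqP ->.
by move/eqP: re; rewrite !mulrBl !mul1r subr_eq0 => /eqP ->.
Qed.

Lemma abelian_of_lift_uniquely :
  abelian_mod J -> idempotents_lift_uniquely J -> abelian_ring R.
Proof.
have [J0 _ _ _] := idJ.
move=> ab_mod uniq e ee; have Je : J (e * e - e) by rewrite ee subrr.
apply: idempotent_central_of_unique_lift (ab_mod e Je) => // f ff Jfe.
have [g [_ g_uniq]] := uniq e Je.
by rewrite -(g_uniq f) // (g_uniq e) // subrr.
Qed.

End LiftingModJ.

Theorem lemma2p9 (R : pzRingType) (J : R -> Prop) :
  ideal J -> (forall x, J x -> jacobson x) -> idempotents_lift J ->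
  (abelian_ring R <-> abelian_mod J /\ idempotents_lift_uniquely J).
Proof.
move=> idJ J_jacobson lift; split => [ab | [ab_mod uniq]].
  split; [exact: abelian_mod_of_abelian | exact: lift_uniquely_of_abelian].
exact: abelian_of_lift_uniquely idJ ab_mod uniq.
Qed.
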